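(* Let $r\ge1$, $n$ be integers and let $\sigma,\sigma':\mathbb{Z}_n\to\{0,1\}$ be a temporally periodic pair. Then for every block $[i,j]\in B(\sigma')$, each of the cell intervals $[i-r-1,j-r]$ and $[i+r,j+r+1]$ contains exactly one switch point of $\sigma$.
   Context: Cells are elements of $\mathbb{Z}_n$, arithmetic mod $n$; $[a,b]$ denotes the cyclic interval $a,\dots,b$. The majority rule with radius $r$: $\mathrm{maj}_r(\sigma)(i)=0$ if among the cells of $[i-r,i+r]$ strictly more have value $0$ than $1$ under $\sigma$, and $=1$ otherwise. A pair $\sigma,\sigma'$ is a temporally periodic pair if $\mathrm{maj}_r(\sigma)=\sigma'$ and $\mathrm{maj}_r(\sigma')=\sigma$. For $\beta\in\{0,1\}$, $B^\beta(\sigma)$ is the set of cell intervals $[i,j]$ with $\sigma(k)=\beta$ for all $k\in[i,j]$ and $\sigma(i-1)=\sigma(j+1)=1-\beta$; $B(\sigma)=B^0(\sigma)\cup B^1(\sigma)$. A switch point of $\sigma$ is a pair of consecutive cells $\ell,\ell+1$ with $\sigma(\ell)\ne\sigma(\ell+1)$; an interval contains the switch point if it contains both $\ell$ and $\ell+1$. *)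

(* Cells of Z_n are represented by integers; a configuration
   sigma : Z_n -> {0,1} is represented as an n-periodic function Z -> bool
   (false = 0, true = 1). *)
From Stdlib Require Import ZArith List Bool.
Import ListNotations.
Open Scope Z_scope.

Definition periodic (n : nat) (s : Z -> bool) : Prop :=
  forall k : Z, s (k + Z.of_nat n) = s k.

Definition zrange (a : Z) (len : nat) : list Z :=
  map (fun t => a + Z.of_nat t) (seq 0 len).

Definition zeros_in (s : Z -> bool) (r : nat) (i : Z) : nat :=
  length (filter (fun k => negb (s k)) (zrange (i - Z.of_nat r) (2 * r + 1))).
Definition ones_in (s : Z -> bool) (r : nat) (i : Z) : nat :=
  length (filter (fun k => s k) (zrange (i - Z.of_nat r) (2 * r + 1))).

Definition maj (r : nat) (s : Z -> bool) (i : Z) : bool :=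
  negb (Nat.ltb (ones_in s r i) (zeros_in s r i)).

Definition temporally_periodic_pair (r : nat) (s s' : Z -> bool) : Prop :=
  (forall i, maj r s i = s' i) /\ (forall i, maj r s' i = s i).

(* [i, j] (cyclic interval i, ..., j, represented with i <= j < i + n)
   is a maximal block of value b of s *)
Definition is_block (n : nat) (s : Z -> bool) (b : bool) (i j : Z) : Prop :=
  i <= j < i + Z.of_nat n /\
  (forall k, i <= k <= j -> s k = b) /\
  s (i - 1) = negb b /\ s (j + 1) = negb b.

Definition in_B (n : nat) (s : Z -> bool) (i j : Z) : Prop :=
  exists b : bool, is_block n s b i j.

(* number of switch points l, l+1 of s contained in the cell interval [a, b],
   i.e. a <= l and l + 1 <= b *)
Definition switch_count (s : Z -> bool) (a b : Z) : nat :=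
  length (filter (fun l => negb (Bool.eqb (s l) (s (l + 1))))
                 (zrange a (Z.to_nat (b - a)))).

(* Write c for the value of a block [i, j] of σ' = maj σ. Where maj σ turns into
   c, the window gains a c-cell and loses a non-c cell, so σ(i-r-1) ≠ c = σ(i+r);
   symmetrically σ(j-r) = c ≠ σ(j+r+1). Since σ = maj σ' and σ' = c on [i, j],
   sliding the window from k to k+1 inside [i-r-1, j-r] only adds c-cells, so
   once σ equals c there it stays c: σ is monotone on that interval and switches
   exactly once. On [i+r, j+r+1] the window only drops c-cells, so σ is monotone
   towards the other value. *)
From Stdlib Require Import ZArith List Bool Lia.
Import ListNotations.
Open Scope Z_scope.

Lemma zrange_cons a len : zrange a (S len) = a :: zrange (a + 1) len.
Proof.
  unfold zrange; cbn; f_equal; [lia|].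
  rewrite <- seq_shift, map_map; apply map_ext; intro t; lia.
Qed.

Lemma zrange_snoc a len : zrange a (S len) = zrange a len ++ [a + Z.of_nat len].
Proof. unfold zrange; rewrite seq_S, map_app; reflexivity. Qed.

Lemma in_zrange a len x : In x (zrange a len) <-> a <= x < a + Z.of_nat len.
Proof.
  unfold zrange; rewrite in_map_iff; split.
  - intros [t [<- Ht]]; apply in_seq in Ht; lia.
  - intro Hx; exists (Z.to_nat (x - a)); rewrite in_seq; lia.
Qed.

Definition count_in (f : Z -> bool) (a : Z) (len : nat) : nat :=
  length (filter f (zrange a len)).

Lemma count_in_cons f a len :
  count_in f a (S len) = (Nat.b2n (f a) + count_in f (a + 1)%Z len)%nat.
Proof. unfold count_in; rewrite zrange_cons; cbn; destruct (f a); reflexivity. Qed.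

Lemma count_in_snoc f a len :
  count_in f a (S len) = (count_in f a len + Nat.b2n (f (a + Z.of_nat len)%Z))%nat.
Proof.
  unfold count_in; rewrite zrange_snoc, filter_app, length_app; cbn.
  destruct (f (a + Z.of_nat len)); reflexivity.
Qed.

Definition window_count (s : Z -> bool) (c : bool) (r : nat) (k : Z) : nat :=
  count_in (fun x => Bool.eqb (s x) c) (k - Z.of_nat r) (2 * r + 1).

(* The window has odd size 2r+1, so there are no ties. *)
Lemma maj_eq_iff r s c k : maj r s k = c <-> (r < window_count s c r k)%nat.
Proof.
  unfold maj, ones_in, zeros_in, window_count, count_in.
  change (fun x => s x) with s.
  set (l := zrange (k - Z.of_nat r) (2 * r + 1)).
  assert (Hsize : (length (filter s l) + length (filter (fun x => negb (s x)) l))%nat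
                  = (2 * r + 1)%nat).
  { rewrite filter_length; unfold l, zrange; rewrite length_map, length_seq; reflexivity. }
  destruct c;
    [rewrite (filter_ext (fun x => Bool.eqb (s x) true) s) by (intro x; destruct (s x); reflexivity)
    |change (fun x => Bool.eqb (s x) false) with (fun x => negb (s x))];
    destruct (Nat.ltb_spec (length (filter s l)) (length (filter (fun x => negb (s x)) l)));
    cbn [negb]; split; intro; (discriminate || lia || reflexivity).
Qed.

Lemma window_count_succ s c r k :
  (window_count s c r (k + 1)%Z + Nat.b2n (Bool.eqb (s (k - Z.of_nat r)%Z) c)
   = window_count s c r k + Nat.b2n (Bool.eqb (s (k + Z.of_nat r + 1)%Z) c))%nat.
Proof.
  unfold window_count.
  pose proof (count_in_cons (fun x => Bool.eqb (s x) c) (k - Z.of_nat r) (2 * r + 1)) as Hcons.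
  pose proof (count_in_snoc (fun x => Bool.eqb (s x) c) (k - Z.of_nat r) (2 * r + 1)) as Hsnoc.
  replace (k - Z.of_nat r + 1) with (k + 1 - Z.of_nat r) in Hcons by lia.
  replace (k - Z.of_nat r + Z.of_nat (2 * r + 1)) with (k + Z.of_nat r + 1) in Hsnoc by lia.
  lia.
Qed.

Lemma maj_switch_endpoints r s c k :
  maj r s k = negb c -> maj r s (k + 1) = c ->
  s (k - Z.of_nat r) = negb c /\ s (k + Z.of_nat r + 1) = c.
Proof.
  intros Hk Hk1.
  assert (Hlow : (window_count s c r k <= r)%nat).
  { destruct (Nat.le_gt_cases (window_count s c r k) r) as [H | H]; [exact H|].
    apply maj_eq_iff in H; rewrite H in Hk; destruct c; discriminate. }
  apply maj_eq_iff in Hk1.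
  pose proof (window_count_succ s c r k) as Hslide.
  destruct (s (k - Z.of_nat r)), (s (k + Z.of_nat r + 1)), c;
    cbn in *; split; (reflexivity || lia).
Qed.

Lemma window_count_le_succ s c r k :
  s (k - Z.of_nat r) = negb c \/ s (k + Z.of_nat r + 1) = c ->
  (window_count s c r k <= window_count s c r (k + 1)%Z)%nat.
Proof.
  intro Hcase; pose proof (window_count_succ s c r k) as Hslide.
  destruct (s (k - Z.of_nat r)), (s (k + Z.of_nat r + 1)), c;
    cbn in *; destruct Hcase; (discriminate || lia).
Qed.

Lemma maj_persists r s c y z :
  y <= z ->
  (forall k, y <= k < z -> s (k - Z.of_nat r) = negb c \/ s (k + Z.of_nat r + 1) = c) ->
  maj r s y = c -> maj r s z = c.
Proof.
  intros Hyz Hstep; rewrite !maj_eq_iff; intro Hy.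
  replace z with (y + Z.of_nat (Z.to_nat (z - y))) in * by lia.
  induction (Z.to_nat (z - y)) as [|d IH].
  - rewrite Z.add_0_r; exact Hy.
  - replace (y + Z.of_nat (S d)) with (y + Z.of_nat d + 1) in * by lia.
    eapply Nat.lt_le_trans; [apply IH; intros; [lia | apply Hstep; lia]|].
    apply window_count_le_succ, Hstep; lia.
Qed.

Lemma switch_count_step s a b :
  a < b ->
  switch_count s a b
  = (Nat.b2n (negb (Bool.eqb (s a) (s (a + 1)%Z))) + switch_count s (a + 1)%Z b)%nat.
Proof.
  intro Hab; unfold switch_count.
  replace (Z.to_nat (b - a)) with (S (Z.to_nat (b - (a + 1)))) by lia.
  exact (count_in_cons _ a _).
Qed.

Lemma switch_count_const s c a b :
  (forall x, a <= x <= b -> s x = c) -> switch_count s a b = 0%nat.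
Proof.
  intro Hconst; unfold switch_count.
  rewrite (filter_ext_in _ (fun _ => false)), filter_false; [reflexivity|].
  intros x Hx; apply in_zrange in Hx.
  rewrite !Hconst by lia; rewrite eqb_reflx; reflexivity.
Qed.

Lemma switch_count_monotone s c a b :
  a <= b -> s a = negb c -> s b = c ->
  (forall x y, a <= x -> x <= y <= b -> s x = c -> s y = c) ->
  switch_count s a b = 1%nat.
Proof.
  intro Hab; replace a with (b - Z.of_nat (Z.to_nat (b - a))) by lia.
  induction (Z.to_nat (b - a)) as [|d IH]; intros Ha Hb Hmono.
  - rewrite Z.sub_0_r, Hb in Ha; destruct c; discriminate.
  - rewrite switch_count_step by lia.
    replace (b - Z.of_nat (S d) + 1) with (b - Z.of_nat d) in * by lia.
    assert (Hnext : s (b - Z.of_nat d) = c \/ s (b - Z.of_nat d) = negb c)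
      by (destruct (s (b - Z.of_nat d)), c; auto).
    rewrite Ha; destruct Hnext as [Hnext | Hnext]; rewrite Hnext.
    + rewrite (switch_count_const s c)
        by (intros x Hx; apply (Hmono (b - Z.of_nat d)); [lia | lia | exact Hnext]).
      destruct c; reflexivity.
    + rewrite eqb_reflx; apply IH; [exact Hnext | exact Hb |].
      intros x y Hx Hxy; apply Hmono; lia.
Qed.

Theorem claim7 (r n : nat) (s s' : Z -> bool) :
  (1 <= r)%nat -> (0 < n)%nat ->
  periodic n s -> periodic n s' ->
  temporally_periodic_pair r s s' ->
  forall i j : Z, in_B n s' i j ->
    switch_count s (i - Z.of_nat r - 1) (j - Z.of_nat r) = 1%nat /\
    switch_count s (i + Z.of_nat r) (j + Z.of_nat r + 1) = 1%nat.
Proof.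
  intros _ _ _ _ [Hs' Hs] i j [b [[Hij _] [Hblock [Hbefore Hafter]]]].
  destruct (maj_switch_endpoints r s b (i - 1)) as [Hleft_out Hleft_in].
  { rewrite Hs'; exact Hbefore. }
  { rewrite Hs'; apply Hblock; lia. }
  destruct (maj_switch_endpoints r s (negb b) j) as [Hright_in Hright_out].
  { rewrite Hs', negb_involutive; apply Hblock; lia. }
  { rewrite Hs'; exact Hafter. }
  replace (i - 1 - Z.of_nat r) with (i - Z.of_nat r - 1) in Hleft_out by lia.
  replace (i - 1 + Z.of_nat r + 1) with (i + Z.of_nat r) in Hleft_in by lia.
  rewrite negb_involutive in Hright_in.
  split.
  - apply (switch_count_monotone s b); [lia | exact Hleft_out | exact Hright_in |].
    intros x y Hax Hxy Hx; rewrite <- Hs in Hx |- *.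
    apply (maj_persists r s' b x y); [lia | | exact Hx].
    intros k Hk; right; apply Hblock; lia.
  - apply (switch_count_monotone s (negb b));
      [lia | rewrite negb_involutive; exact Hleft_in | exact Hright_out |].
    intros x y Hax Hxy Hx; rewrite <- Hs in Hx |- *.
    apply (maj_persists r s' (negb b) x y); [lia | | exact Hx].
    intros k Hk; left; rewrite negb_involutive; apply Hblock; lia.
Qed.
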